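(* Let $\mathcal{M}$, $\sigma_*$, $\sigma$, $\bar x$, $\delta$, $\phi$, $\mathcal{D}$ and $\bar\phi$ be as described in the context. Then $\bar\phi$ is well defined with values in $N^{\mathrm{red}}_{\mathcal{M}}(\bar x)$, it is locally symmetric in the sense that $\bar\phi(\sigma'x)=\bar\phi(x)$ for all $x\in\mathcal{D}$ and all $\sigma'\in\Sigma^n$ with $\sigma'\bar x=\bar x$, and it is a local equation of $\mathcal{M}$ around $\bar x$: for $x\in\mathcal{D}$ one has $\bar\phi(x)=0$ iff $x\in\mathcal{M}\cap B(\bar x,\delta)$, and the Jacobian of $\bar\phi$ at $\bar x$, as a linear map from $T_{\mathcal{M}}(\bar x)\oplus N^{\mathrm{red}}_{\mathcal{M}}(\bar x)$ to $N^{\mathrm{red}}_{\mathcal{M}}(\bar x)$, is onto.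
   Context: $\Sigma^n$ permutations of $\mathbb{N}_n$ acting by $(\sigma x)_i=x_{\sigma^{-1}(i)}$; $P(\sigma)$ orbit partition; $P(x)$ partition by equal coordinates; $\Delta(\sigma)=\{x:P(x)=P(\sigma)\}$; $\Delta(\sigma)^{\perp\perp}=\{x:x_i=x_j$ whenever $i,j$ lie in the same set of $P(\sigma)\}$ and $\Delta(\sigma)^\perp$ its orthogonal complement; $\mathbb{R}^n_\ge=\{x:x_1\ge\cdots\ge x_n\}$; $B(x,\delta)$ open ball. A set $S$ is locally symmetric if $S\cap\mathbb{R}^n_\ge\ne\emptyset$ and each $x\in S$ has $\delta>0$ with $\sigma(S\cap B(x,\delta))=S\cap B(x,\delta)$ for all $y\in S\cap B(x,\delta)$, all $\sigma$ with $\sigma y=y$ (strongly locally symmetric: $\sigma S=S$ for all $y\in S$, all $\sigma$ with $\sigma y=y$). $\mathcal{M}$ is a locally symmetric $C^2$ submanifold (connected, without boundary) of dimension $d$, with characteristic permutation $\sigma_*$ (i.e. $\mathcal{M}\cap B(y,\rho)\subset\Delta(\sigma_* )$ for some $y\in\mathcal{M}$, $\rho>0$); $\kappa_*=|\mathbb{N}_n\setminus\mathrm{supp}(\sigma_* )|$. For $x\in\mathbb{R}^n$, $x^F\in\mathbb{R}^{\kappa_*}$ collects the coordinates with indices in $\mathbb{N}_n\setminus\mathrm{supp}(\sigma_* )$ and $x^M\in\mathbb{R}^{n-\kappa_*}$ the others (in increasing index order), and $x^F\otimes x^M$ denotes the inverse reassembling. Fix $\bar x\in\mathcal{M}\cap\Delta(\sigma)$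 and $\delta>0$ such that: $B(\bar x,\delta)$ meets only strata $\Delta(\sigma')$ with $P(\sigma')$ refining $P(\sigma)$; $\mathcal{M}\cap B(\bar x,\delta)$ is strongly locally symmetric; and the orthogonal projection $\bar\pi_T$ onto $\bar x+T_{\mathcal{M}}(\bar x)$ restricted to $\mathcal{M}\cap B(\bar x,\delta)$ is a diffeomorphism onto its image. Let $\phi:(\bar x+T_{\mathcal{M}}(\bar x))\cap B(\bar x,\delta)\to N_{\mathcal{M}}(\bar x)$ be the $C^2$ map with $\mathcal{M}\cap B(\bar x,\delta)=\{x+\phi(x)\}$. Set $N^{\mathrm{red}}_{\mathcal{M}}(\bar x)=N_{\mathcal{M}}(\bar x)\cap\Delta(\sigma)^{\perp\perp}$, choose $\delta_1,\delta_2>0$ with $\mathcal{B}:=B(\bar x^F,\delta_1)\otimes B(\bar x^M,\delta_2)\subset B(\bar x,\delta)$, and $\mathcal{D}=(\bar x+T_{\mathcal{M}}(\bar x)\oplus N^{\mathrm{red}}_{\mathcal{M}}(\bar x))\cap\mathcal{B}$. Let $\bar\pi^{\mathrm{red}}_N$ be the orthogonal projection onto $\bar x+N^{\mathrm{red}}_{\mathcal{M}}(\bar x)$ and define $\bar\phi(x)=\bar x+\phi(\bar\pi_T(x))-\bar\pi^{\mathrm{red}}_N(x)$ for $x\in\mathcal{D}$. *)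

From HB Require Import structures.
From mathcomp Require Import all_boot all_order all_algebra all_fingroup.
From mathcomp Require Import all_classical all_reals all_analysis.
Set Implicit Arguments. Unset Strict Implicit. Unset Printing Implicit Defensive.
Import Order.TTheory GRing.Theory Num.Theory.
Import numFieldNormedType.Exports.
Local Open Scope classical_set_scope.
Local Open Scope ring_scope.

Section Defs.
Variables (R : realType) (n : nat).
Local Notation V := 'rV[R]_n.

Definition dot (x y : V) : R := \sum_(i < n) x 0 i * y 0 i.
Definition enorm (x : V) : R := Num.sqrt (dot x x).
Definition eball (x : V) (r : R) : set V := [set y | enorm (y - x) < r].

Definition pdist (I : pred 'I_n) (x y : V) : R :=
  Num.sqrt (\sum_(i < n | I i) (x 0 i - y 0 i) ^+ 2).

Definition pact (s : 'S_n) (x : V) : V := \row_i x 0 ((s^-1)%g i).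

(* Delta(s) : x with P(x) = P(s) *)
Definition Delta (s : 'S_n) : set V :=
  [set x | forall i j : 'I_n, (x 0 i = x 0 j) <-> (j \in porbit s i)].
(* Delta(s)^{perp perp} *)
Definition Deltapp (s : 'S_n) : set V :=
  [set x | forall i j : 'I_n, j \in porbit s i -> x 0 i = x 0 j].

Definition refines (s' s : 'S_n) : Prop :=
  forall i j : 'I_n, j \in porbit s' i -> j \in porbit s i.

Definition Rge_cone : set V :=
  [set x | forall i j : 'I_n, (i <= j)%N -> x 0 j <= x 0 i].

Definition locally_symmetric (S : set V) : Prop :=
  (S `&` Rge_cone !=set0) /\
  forall x, S x -> exists2 d : R, 0 < d &
    forall y (s : 'S_n), (S `&` eball x d) y -> pact s y = y ->
      pact s @` (S `&` eball x d) = S `&` eball x d.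

Definition strongly_locally_symmetric (S : set V) : Prop :=
  (S `&` Rge_cone !=set0) /\
  forall y (s : 'S_n), S y -> pact s y = y -> pact s @` S = S.

Definition C2_on (m : nat) (U : set V) (f : V -> 'rV[R]_m) : Prop :=
  open U /\
  forall x, U x -> forall u v : V,
    [/\ derivable f x u, derivable ('D_u f) x v,
        {for x, continuous ('D_u f)} & {for x, continuous ('D_v ('D_u f))}].

Definition C2_submanifold (d : nat) (M : set V) : Prop :=
  [/\ (d <= n)%N, connected M &
  forall x, M x -> exists U : set V, exists F : V -> 'rV[R]_(n - d),
    [/\ open U, U x, C2_on U F,
        (forall w, exists v, 'D_v F x = w) &
        M `&` U = [set y | U y /\ F y = 0]]].

Definition tangent_space (M : set V) (x : V) : set V :=
  [set v | exists g : R -> V, exists2 e : R, 0 < e &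
     [/\ forall t, `|t| < e -> M (g t), g 0 = x,
         derivable g 0 1 & 'D_1 g 0 = v]].

Definition normal_sp (M : set V) (x : V) : set V :=
  [set w | forall v, tangent_space M x v -> dot w v = 0].

Definition is_orth_proj (S : set V) (p : V -> V) : Prop :=
  forall y, S (p y) /\ forall v, S v -> dot (y - p y) v = 0.

Definition characteristic_perm (M : set V) (s : 'S_n) : Prop :=
  exists y, M y /\ exists2 rho : R, 0 < rho & M `&` eball y rho `<=` Delta s.

Definition subsum (A B : set V) : set V := [set a + b | a in A & b in B].

(* phibar x = xbar + phi(piT x) - piNred x, with piT x = xbar + pT (x - xbar),
   piNred x = xbar + pN (x - xbar) *)
Definition phibar (xbar : V) (phi pT pN : V -> V) (x : V) : V :=
  xbar + phi (xbar + pT (x - xbar)) - (xbar + pN (x - xbar)).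

End Defs.

From HB Require Import structures.
From mathcomp Require Import all_boot all_order all_algebra all_fingroup.
From mathcomp Require Import all_classical all_reals all_analysis.
Import Order.TTheory GRing.Theory Num.Theory.
Import numFieldNormedType.Exports.
Local Open Scope classical_set_scope.
Local Open Scope ring_scope.

Set Implicit Arguments.
Unset Strict Implicit.
Unset Printing Implicit Defensive.

(* The stabiliser of [xbar] preserves [M] near [xbar], hence the tangent and
   normal spaces, and the graph description makes [phi] equivariant under it.
   Equivariance under transpositions inside the orbits of [sigma] puts the
   values of [phi] in the reduced normal space, which the stabiliser fixes
   pointwise, so [phibar] is invariant.  Splitting [x - xbar = t + r] into a
   tangent and a reduced normal part gives [phibar x = phi (xbar + t) - r],
   which vanishes exactly on the graph and whose differential at [xbar] is
   minus the identity on reduced normal directions.  Differentiability comes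
   from the continuity of the partial derivatives of [phi \o piT]. *)

Section InnerProduct.
Variables (R : realType) (n : nat).
Local Notation V := 'rV[R]_n.
Implicit Types (x y z : V).

Lemma dotC x y : dot x y = dot y x.
Proof. by apply: eq_bigr => i _; rewrite mulrC. Qed.

Lemma dotDl x y z : dot (x + y) z = dot x z + dot y z.
Proof. by rewrite /dot -big_split; apply: eq_bigr => i _; rewrite !mxE mulrDl. Qed.

Lemma dotZl (a : R) x y : dot (a *: x) y = a * dot x y.
Proof. by rewrite /dot mulr_sumr; apply: eq_bigr => i _; rewrite !mxE mulrA. Qed.

Lemma dot0l x : dot 0 x = 0.
Proof. by rewrite -(scale0r x) dotZl mul0r. Qed.

Lemma dotBl x y z : dot (x - y) z = dot x z - dot y z.
Proof. by rewrite dotDl -scaleN1r dotZl mulN1r. Qed.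

Lemma dotDr x y z : dot x (y + z) = dot x y + dot x z.
Proof. by rewrite dotC dotDl !(dotC x). Qed.

Lemma dotZr (a : R) x y : dot x (a *: y) = a * dot x y.
Proof. by rewrite dotC dotZl dotC. Qed.

Lemma dotBr x y z : dot x (y - z) = dot x y - dot x z.
Proof. by rewrite dotC dotBl !(dotC x). Qed.

Lemma dot_self_ge0 x : 0 <= dot x x.
Proof. by apply: sumr_ge0 => i _; rewrite -expr2 sqr_ge0. Qed.

Lemma dot_self_eq0 x : dot x x = 0 -> x = 0.
Proof.
move=> /eqP; rewrite psumr_eq0 => [/allP x0|i _]; last by rewrite -expr2 sqr_ge0.
apply/rowP => i; rewrite mxE.
by have /(_ (mem_index_enum i)) := x0 i; rewrite /= mulf_eq0 orbb => /eqP.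
Qed.

Lemma dot_self_add_orth x y : dot x y = 0 -> dot (x + y) (x + y) = dot x x + dot y y.
Proof. by move=> xy; rewrite dotDl !dotDr xy dotC xy addr0 add0r. Qed.

Lemma dot_suml (F : 'I_n -> V) y :
  dot (\sum_(k < n) F k) y = \sum_(k < n) dot (F k) y.
Proof.
by rewrite /dot exchange_big /=; apply: eq_bigr => i _; rewrite summxE mulr_suml.
Qed.

Lemma dot_delta_mx x i : dot x (delta_mx 0 i) = x 0 i.
Proof.
rewrite /dot (bigD1 i) //= big1 => [|k ki]; first by rewrite !mxE !eqxx mulr1 addr0.
by rewrite !mxE (negbTE ki) andbF mulr0.
Qed.

End InnerProduct.

Section PermutationAction.
Variables (R : realType) (n : nat).
Local Notation V := 'rV[R]_n.
Implicit Types (x y w : V) (s : 'S_n).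

Lemma pactD s : {morph @pact R n s : x y / x + y}.
Proof. by move=> x y; apply/rowP => i; rewrite !mxE. Qed.

Lemma pactB s : {morph @pact R n s : x y / x - y}.
Proof. by move=> x y; apply/rowP => i; rewrite !mxE. Qed.

Lemma pactK s : cancel (@pact R n s) (pact s^-1).
Proof. by move=> x; apply/rowP => i; rewrite !mxE invgK permK. Qed.

Lemma pactV_fix s x : pact s x = x -> pact s^-1 x = x.
Proof. by move=> sx; rewrite -{1}sx pactK. Qed.

Lemma dot_pact s x y : dot (pact s x) y = dot x (pact s^-1 y).
Proof.
rewrite /dot (reindex_inj (@perm_inj _ s)) /=.
by apply: eq_bigr => i _; rewrite !mxE invgK permK.
Qed.

Lemma pact_derive s (g : R -> V) t : derivable g t 1 ->
  derivable (pact s \o g) t 1 /\ 'D_1 (pact s \o g) t = pact s ('D_1 g t).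
Proof.
move=> dg.
have gE i j : (fun u => (pact s \o g) u i j) = (fun u => g u 0 ((s^-1)%g j)).
  by apply: funext => u; rewrite /= mxE.
have dsg : derivable (pact s \o g) t 1.
  by apply/derivable_mxP => i j; rewrite gE; move/derivable_mxP : dg; apply.
split => //; apply/rowP => j.
by rewrite (derive_mx dsg) !mxE gE (derive_mx dg) mxE.
Qed.

Lemma pact_tperm (i j : 'I_n) x :
  x - pact (tperm i j) x = (x 0 i - x 0 j) *: (delta_mx 0 i - delta_mx 0 j).
Proof.
apply/rowP => k; rewrite !mxE tpermV.
case: tpermP => [->|->|/eqP ki /eqP kj].
- rewrite eqxx /=; case: (eqVneq i j) => [->|ij]; first by rewrite !subrr mul0r.
  by rewrite eqxx subr0 mulr1.
- rewrite eqxx /=; case: (eqVneq j i) => [->|ji]; first by rewrite !subrr mul0r.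
  by rewrite eqxx sub0r mulrN1 opprB.
- by rewrite (negbTE ki) (negbTE kj) andbF subrr subrr mulr0.
Qed.

Lemma pact_tperm_fix (i j : 'I_n) x : x 0 i = x 0 j -> pact (tperm i j) x = x.
Proof.
move=> xij; apply/eqP; rewrite eq_sym -subr_eq0 pact_tperm xij subrr.
by rewrite scale0r.
Qed.

(* The stabiliser of a point of the stratum [Delta sigma] permutes each orbit
   of [sigma], so it fixes [Deltapp sigma] pointwise. *)
Lemma Deltapp_pact_fix (sigma s : 'S_n) x w :
  Delta sigma x -> pact s x = x -> Deltapp sigma w -> pact s w = w.
Proof.
move=> Dx sx Pw; apply/rowP => i; rewrite mxE.
have : x 0 ((s^-1)%g i) = x 0 i by rewrite -{2}sx mxE.
by move/esym/(Dx i) => /Pw ->.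
Qed.

End PermutationAction.

Section Subspaces.
Variables (R : realType) (n : nat).
Local Notation V := 'rV[R]_n.
Implicit Types (S : set V) (x y w : V).

Definition is_subspace S := S 0 /\ forall (a : R) x y, S x -> S y -> S (a *: x + y).

Variable S : set V.
Hypothesis subS : is_subspace S.

Lemma subspace0 : S 0. Proof. exact: subS.1. Qed.

Lemma subspaceZ (a : R) x : S x -> S (a *: x).
Proof. by move=> Sx; rewrite -[_ *: _]addr0; apply: subS.2 Sx subspace0. Qed.

Lemma subspaceD x y : S x -> S y -> S (x + y).
Proof. by rewrite -{2}[x]scale1r; apply: subS.2. Qed.

Lemma subspaceN x : S x -> S (- x).
Proof. by rewrite -scaleN1r; apply: subspaceZ. Qed.

Lemma subspaceB x y : S x -> S y -> S (x - y).
Proof. by move=> Sx /subspaceN; apply: subspaceD. Qed.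

Lemma subspace_sum (F : 'I_n -> V) : (forall k, S (F k)) -> S (\sum_(k < n) F k).
Proof. by move=> SF; apply: big_ind => //; [exact: subspace0 | exact: subspaceD]. Qed.

End Subspaces.

Lemma subspaceI (R : realType) n (S1 S2 : set 'rV[R]_n) :
  is_subspace S1 -> is_subspace S2 -> is_subspace (S1 `&` S2).
Proof.
move=> [S1_0 S1_lin] [S2_0 S2_lin]; split => // a x y [? ?] [? ?].
by split; [exact: S1_lin | exact: S2_lin].
Qed.

Lemma normal_sp_subspace (R : realType) n (M : set 'rV[R]_n) x :
  is_subspace (normal_sp M x).
Proof.
split=> [v _|a w w' Nw Nw' v Tv]; first exact: dot0l.
by rewrite dotDl dotZl Nw // Nw' // mulr0 addr0.
Qed.

Lemma Deltapp_subspace (R : realType) n (sigma : 'S_n) :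
  is_subspace (Deltapp (R := R) sigma).
Proof.
by split=> [i j _|a x y Px Py i j ij]; rewrite !mxE // (Px _ _ ij) (Py _ _ ij).
Qed.

Section OrthogonalProjection.
Variables (R : realType) (n : nat).
Local Notation V := 'rV[R]_n.
Implicit Types (x y q t u w : V).

Lemma orth_proj_uniq (S : set V) y q q' : S q -> S q' ->
    (forall v, S v -> dot (y - q) v = 0) -> (forall v, S v -> dot (y - q') v = 0) ->
  q = q'.
Proof.
move=> Sq Sq' yq yq'; apply/eqP; rewrite -subr_eq0; apply/eqP/dot_self_eq0.
have -> : q - q' = (y - q') - (y - q) by rewrite opprB [RHS]addrC addrA subrK.
by rewrite dotBl !dotBr (yq _ Sq) (yq _ Sq') (yq' _ Sq) (yq' _ Sq') !subrr.
Qed.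

Variables (S : set V) (p : V -> V).
Hypothesis pS : is_orth_proj S p.

Lemma orth_projE y q : S q -> (forall v, S v -> dot (y - q) v = 0) -> p y = q.
Proof. by move=> Sq yq; apply: orth_proj_uniq (pS y).1 Sq (pS y).2 yq. Qed.

Lemma orth_proj_id q : S q -> p q = q.
Proof. by move=> Sq; apply: orth_projE => // v _; rewrite subrr dot0l. Qed.

Lemma orth_projDorth t w : S t -> (forall v, S v -> dot w v = 0) -> p (t + w) = t.
Proof.
by move=> St wS; apply: orth_projE => // v; rewrite [t + w]addrC addrK; apply: wS.
Qed.

Lemma orth_proj_norm u : enorm (p u) <= enorm u.
Proof.
rewrite /enorm ler_sqrt ?dot_self_ge0 //.
have := dot_self_add_orth ((pS u).2 _ (pS u).1); rewrite subrK => ->.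
by rewrite lerDr dot_self_ge0.
Qed.

Lemma orth_proj_mulmx :
  is_subspace S -> forall u, p u = u *m \matrix_k p (delta_mx 0 k).
Proof.
move=> subS u; apply: orth_projE.
  rewrite mulmx_sum_row; apply: (subspace_sum subS) => k.
  by rewrite rowK; apply: (subspaceZ subS); exact: (pS _).1.
move=> v Sv; rewrite {1}(row_sum_delta u) mulmx_sum_row -sumrB dot_suml.
by rewrite big1 // => k _; rewrite rowK -scalerBr dotZl (pS _).2 // mulr0.
Qed.

Lemma orth_proj_pact (s : 'S_n) u :
    (forall v, S v -> S (pact s v)) -> (forall v, S v -> S (pact s^-1 v)) ->
  p (pact s u) = pact s (p u).
Proof.
move=> Ss Ss'; apply: orth_projE; first exact/Ss/(pS _).1.
by move=> v Sv; rewrite -pactB dot_pact; apply/(pS u).2/Ss'.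
Qed.

End OrthogonalProjection.

Section TangentSpace.
Variables (R : realType) (n : nat) (M : set 'rV[R]_n) (x : 'rV[R]_n).
Local Notation T := (tangent_space M x).

Lemma tangent_space0 : M x -> T 0.
Proof. by move=> Mx; exists (fun=> x), 1 => //; split => //; exact: derive_cst. Qed.

Lemma tangent_space_pact (U : set 'rV[R]_n) (s : 'S_n) v :
    open U -> U x -> pact s x = x -> (forall y, M y -> U y -> M (pact s y)) ->
  T v -> T (pact s v).
Proof.
move=> oU Ux sx MU [g [e e0 [Mg g0 dg <-]]].
have /derivable1_diffP/differentiable_continuous gc := dg.
have /gc /nbhs_ballP [e' /= e'0 gU] : nbhs (g 0) U.
  by rewrite g0; apply: open_nbhs_nbhs.
exists (pact s \o g), (Num.min e e'); first by rewrite lt_min e0 e'0.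
split; last 2 first.
- exact: (pact_derive s dg).1.
- exact: (pact_derive s dg).2.
- move=> t; rewrite lt_min => /andP[te te']; apply: MU; first exact: Mg.
  by apply: gU; rewrite -ball_normE /= sub0r normrN.
- by rewrite /= g0.
Qed.

Lemma normal_sp_pact (s : 'S_n) w :
    (forall v, T v -> T (pact s^-1 v)) -> normal_sp M x w -> normal_sp M x (pact s w).
Proof. by move=> Ts Nw v Tv; rewrite dot_pact; apply/Nw/Ts. Qed.

End TangentSpace.

Section ContinuousPartials.
Variable R : realType.

Lemma mx_entry_le_norm m p (x : 'M[R]_(m, p)) i j : `|x i j| <= `|x|.
Proof.
rewrite [leRHS]/Num.Def.normr /= mx_normrE.
by apply: le_trans; last exact: (le_bigmax _ _ (i, j)).
Qed.

Lemma mx_norm_le_entries m p (x : 'M[R]_(m, p)) (c : R) :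
  0 <= c -> (forall i j, `|x i j| <= c) -> `|x| <= c.
Proof.
move=> c0 xc; rewrite [leLHS]/Num.Def.normr /= mx_normrE.
by apply: bigmax_le => // -[i j] _; exact: xc.
Qed.

Lemma mulmx_norm_le m p (A : 'M[R]_(m, p)) (x : 'rV[R]_m) :
  `|x *m A| <= (\sum_(k < m) `|row k A|) * `|x|.
Proof.
rewrite mulmx_sum_row mulr_suml; apply: le_trans (ler_norm_sum _ _ _) _.
by apply: ler_sum => k _; rewrite normrZ mulrC ler_wpM2l // mx_entry_le_norm.
Qed.

Lemma mulmxr_continuous m p (A : 'M[R]_(m, p)) :
  continuous (mulmxr A : 'rV[R]_m -> 'rV[R]_p).
Proof.
apply: bounded_linear_continuous; apply/linear_boundedP.
by near=> r => x; apply: le_trans (mulmx_norm_le A x) _; rewrite ler_wpM2r.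
Unshelve. all: by end_near.
Qed.

Lemma MVT_segment_norm (G dG : R -> R) (a b : R) : a <= b ->
    (forall t, t \in `[a, b] -> is_derive t 1 G (dG t)) ->
  exists2 xi, xi \in `[a, b] & `|G b - G a| = `|dG xi| * (b - a).
Proof.
move=> ab dG_ab.
have cG : {within `[a, b], continuous G}.
  apply: derivable_within_continuous => t tab.
  exact: (@ex_derive _ _ _ _ _ _ _ (dG_ab t tab)).
have oc (t : R) : t \in `]a, b[ -> t \in `[a, b].
  by rewrite !in_itv /= => /andP[/ltW -> /ltW ->].
have [xi xi_ab ->] := MVT_segment ab (fun t tab => dG_ab t (oc t tab)) cG.
by exists xi => //; rewrite normrM [`|b - a|]ger0_norm // subr_ge0.
Qed.

Lemma mean_value_le (F dF : R -> R) (a eps c : R) :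
    (forall t : R, `|t| <= `|c| -> is_derive t 1 F (dF t)) ->
    (forall t : R, `|t| <= `|c| -> `|dF t - a| <= eps) ->
  `|F c - F 0 - c * a| <= eps * `|c|.
Proof.
move=> dF_c dFa.
pose G := F - a *: (@id R).
have dG (t : R) : `|t| <= `|c| -> is_derive t 1 G (dF t - a).
  move=> tc; have := is_deriveB (dF_c t tc) (is_deriveZ a (is_derive_id t 1)).
  by rewrite /GRing.scale /= mulr1.
have -> : F c - F 0 - c * a = G c - G 0.
  by rewrite /G !fctE scaler0 subr0 -[a *: c]/(a * c) mulrC addrAC.
have [c0|c0] := leP 0 c.
- have dG_seg t : t \in `[0, c] -> is_derive t 1 G (dF t - a).
    by rewrite in_itv /= => /andP[t0 tc]; apply: dG; rewrite !ger0_norm.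
  have [xi] := MVT_segment_norm c0 dG_seg.
  rewrite in_itv /= => /andP[xi0 xic] ->; rewrite subr0 [`|c|]ger0_norm //.
  by apply: ler_pM => //; apply: dFa; rewrite !ger0_norm.
- have dG_seg t : t \in `[c, 0] -> is_derive t 1 G (dF t - a).
    by rewrite in_itv /= => /andP[ct t0]; apply: dG; rewrite !ler0_norm ?lerN2 // ltW.
  have [xi] := MVT_segment_norm (ltW c0) dG_seg.
  rewrite in_itv /= => /andP[cxi xi0]; rewrite distrC => ->.
  rewrite sub0r [`|c|]ler0_norm ?(ltW c0) //.
  apply: ler_wpM2r; first by rewrite oppr_ge0 ltW.
  by apply: dFa; rewrite !ler0_norm ?lerN2 // ltW.
Qed.

Lemma rV_mean_value_le m (g : R -> 'rV[R]_m) (Dg : 'rV[R]_m) (eps c : R) :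
    (forall t : R, `|t| <= `|c| -> derivable g t 1) ->
    (forall t : R, `|t| <= `|c| -> `|'D_1 g t - Dg| <= eps) ->
  `|g c - g 0 - c *: Dg| <= eps * `|c|.
Proof.
move=> dg Dg_eps.
have eps0 : 0 <= eps by apply: le_trans (Dg_eps 0 _); rewrite ?normr0.
apply: mx_norm_le_entries; first by rewrite mulr_ge0.
move=> i j; rewrite (ord1 i) !mxE.
apply: (@mean_value_le (fun t => g t 0 j) (fun t => 'D_1 g t 0 j)).
  move=> t tc; have gt := dg t tc.
  have dgj : derivable (fun u => g u 0 j) t 1 by move/derivable_mxP : gt; apply.
  by apply: DeriveDef; rewrite // (derive_mx gt) mxE.
move=> t tc; apply: le_trans (Dg_eps t tc).
by apply: le_trans (mx_entry_le_norm _ 0 j); rewrite !mxE.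
Qed.

Lemma derivable_along_line (V W : normedModType R) (f : V -> W) (p e : V) (t : R) :
  derivable (fun s : R => f (p + s *: e)) t 1 <-> derivable f (p + t *: e) e.
Proof.
rewrite /derivable; set g1 := fun h => h^-1 *: _; set g2 := fun h => h^-1 *: _.
suff -> : g1 = g2 by [].
by rewrite funeqE /g1 /g2 => h /=; rewrite [h *: (1 : R)]mulr1 scalerDl addrCA.
Qed.

Lemma derive_along_line (V W : normedModType R) (f : V -> W) (p e : V) (t : R) :
  'D_1 (fun s : R => f (p + s *: e)) t = 'D_e f (p + t *: e).
Proof.
rewrite /derive; set g1 := fun h => h^-1 *: _; set g2 := fun h => h^-1 *: _.
suff -> : g1 = g2 by [].
by rewrite funeqE /g1 /g2 => h /=; rewrite [h *: (1 : R)]mulr1 scalerDl addrCA.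
Qed.

Section CoordinatePath.
Variable m : nat.
Implicit Types h : 'rV[R]_m.

(* Walking from [a] to [a + h] through [a + rv_prefix h k] moves one
   coordinate at a time, reducing the increment of [f] to one-variable
   mean-value estimates along the coordinate axes. *)
Definition rv_prefix h (k : nat) : 'rV[R]_m :=
  \row_i (if (i < k)%N then h 0 i else 0).

Lemma rv_prefix0 h : rv_prefix h 0 = 0.
Proof. by apply/rowP => i; rewrite !mxE. Qed.

Lemma rv_prefix_full h : rv_prefix h m = h.
Proof. by apply/rowP => i; rewrite !mxE ltn_ord. Qed.

Lemma rv_prefixS h (k : 'I_m) :
  rv_prefix h k.+1 = rv_prefix h k + h 0 k *: delta_mx 0 k.
Proof.
apply/rowP => i; rewrite !mxE ltnS leq_eqVlt.
case: (eqVneq i k) => [->|ik]; first by rewrite eqxx ltnn mulr1 add0r.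
by rewrite -[(i : nat) == k]/(i == k) (negbTE ik) mulr0 addr0.
Qed.

Lemma rv_prefix_norm h (k : 'I_m) (t : R) :
  `|t| <= `|h 0 k| -> `|rv_prefix h k + t *: delta_mx 0 k| <= `|h|.
Proof.
move=> tk; apply: mx_norm_le_entries => // i j; rewrite (ord1 i) !mxE eqxx /=.
case: (ltnP j k) => [jk|kj].
  by rewrite -[j == k]/((j : nat) == k) (ltn_eqF jk) mulr0 addr0 mx_entry_le_norm.
rewrite add0r; case: (j == k); last by rewrite mulr0 normr0.
by rewrite mulr1 (le_trans tk) // mx_entry_le_norm.
Qed.

End CoordinatePath.

Section ContinuousPartialsDifferentiable.
Variables (m p : nat) (f : 'rV[R]_m -> 'rV[R]_p) (a : 'rV[R]_m).

Definition jacobian_mx : 'M[R]_(m, p) := \matrix_k 'D_(delta_mx 0 k) f a.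

Lemma increment_jacobian_le (r eps : R) (h : 'rV[R]_m) :
    (forall x, `|x - a| < r -> forall v, derivable f x v) ->
    (forall x k, `|x - a| < r ->
       `|'D_(delta_mx 0 k) f x - 'D_(delta_mx 0 k) f a| <= eps) ->
    `|h| < r ->
  `|f (h + a) - f a - h *m jacobian_mx| <= eps * m%:R * `|h|.
Proof.
move=> df Df_eps hr.
have near_a (k : 'I_m) (t : R) : `|t| <= `|h 0 k| ->
    `|(a + rv_prefix h k + t *: delta_mx 0 k) - a| < r.
  by move=> tk; rewrite -[a + _ + _]addrA addrC addrK (le_lt_trans (rv_prefix_norm tk)).
have step (k : 'I_m) : `|f (a + rv_prefix h k.+1) - f (a + rv_prefix h k)
    - h 0 k *: 'D_(delta_mx 0 k) f a| <= eps * `|h 0 k|.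
  have -> : f (a + rv_prefix h k) = f (a + rv_prefix h k + 0 *: delta_mx 0 k).
    by rewrite scale0r addr0.
  rewrite rv_prefixS addrA.
  apply: (@rV_mean_value_le _ (fun t => f (a + rv_prefix h k + t *: delta_mx 0 k))).
    by move=> t tk; apply/derivable_along_line; exact: df (near_a k t tk) _.
  by move=> t tk; rewrite derive_along_line; exact: Df_eps (near_a k t tk).
have telescope : \sum_(k < m) (f (a + rv_prefix h k.+1) - f (a + rv_prefix h k))
    = f (h + a) - f a.
  have := telescope_sumr (fun k => f (a + rv_prefix h k)) (leq0n m).
  by rewrite big_mkord => ->; rewrite rv_prefix_full rv_prefix0 addr0 [a + h]addrC.
have -> : f (h + a) - f a - h *m jacobian_mx = \sum_(k < m)
    (f (a + rv_prefix h k.+1) - f (a + rv_prefix h k) - h 0 k *: 'D_(delta_mx 0 k) f a).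
  rewrite sumrB telescope mulmx_sum_row; congr (_ - _).
  by apply: eq_bigr => k _; rewrite rowK.
apply: le_trans (ler_norm_sum _ _ _) _.
apply: le_trans (_ : \sum_(k < m) eps * `|h| <= _); last first.
  by rewrite sumr_const card_ord -[_ *+ m]mulr_natr mulrAC.
apply: ler_sum => k _; apply: le_trans (step k) _.
have eps0 : 0 <= eps.
  by apply: le_trans (Df_eps a k _); rewrite ?subrr ?normr0 // (le_lt_trans _ hr).
by rewrite ler_wpM2l // mx_entry_le_norm.
Qed.

Lemma continuous_partials_differentiable (r : R) : 0 < r ->
    (forall x, `|x - a| < r -> forall v, derivable f x v) ->
    (forall k, {for a, continuous ('D_(delta_mx 0 k) f)}) ->
  differentiable f a.
Proof.
move=> r0 df cDf.
pose L := mulmxr jacobian_mx : 'rV[R]_m -> 'rV[R]_p.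
have Lcont : continuous L by exact: mulmxr_continuous.
suff fo : f \o shift a = cst (f a) + L +o_ (0 : 'rV[R]_m) id.
  by apply/diff_locallyP; rewrite (diff_unique Lcont fo).
apply/eqaddoP => eps eps0.
pose e := eps / m.+1%:R.
have e0 : 0 < e by rewrite divr_gt0.
have /nbhs_ballP [d /= d0 Dfe] : \forall x \near a, forall k : 'I_m,
    `|'D_(delta_mx 0 k) f a - 'D_(delta_mx 0 k) f x| <= e.
  apply: (@filter_forall _ _ _ _ (nbhs_filter a)) => k.
  by move/(@cvgrPdist_le _ _ _ _ (nbhs_filter a)) : (cDf k); apply.
have dr0 : 0 < Num.min d r by rewrite lt_min d0 r0.
apply/nbhs_ballP; exists (Num.min d r) => // h; rewrite -ball_normE /= sub0r normrN.
move=> hdr; rewrite /= opprD addrA.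
apply: le_trans (@increment_jacobian_le (Num.min d r) e h _ _ hdr) _.
- by move=> x xa; apply: df; apply: lt_le_trans xa _; rewrite ge_min lexx orbT.
- move=> x k xa; rewrite distrC; apply: Dfe.
  by rewrite -ball_normE /= distrC; apply: lt_le_trans xa _; rewrite ge_min lexx.
- rewrite ler_wpM2r // /e mulrAC ler_pdivrMr ?ltr0Sn // ler_pM2l // ler_nat.
  exact: leqnSn.
Qed.

End ContinuousPartialsDifferentiable.

End ContinuousPartials.

Section LocalEquation.
Variables (R : realType) (n : nat).
Local Notation V := 'rV[R]_n.

Record local_graph (M : set V) (sigma : 'S_n) (xbar : V) (delta : R)
    (phi pT pN : V -> V) : Prop := LocalGraph {
  local_graph_base : M xbar;
  local_graph_stratum : Delta sigma xbar;
  local_graph_radius : 0 < delta;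
  local_graph_open : open (eball xbar delta);
  local_graph_sym : strongly_locally_symmetric (M `&` eball xbar delta);
  local_graph_pT : is_orth_proj (tangent_space M xbar) pT;
  local_graph_pN : is_orth_proj (normal_sp M xbar `&` Deltapp sigma) pN;
  local_graph_normal : forall y, tangent_space M xbar (y - xbar) ->
    eball xbar delta y -> normal_sp M xbar (phi y);
  local_graph_graph : M `&` eball xbar delta =
    [set y + phi y | y in
       [set y | tangent_space M xbar (y - xbar) /\ eball xbar delta y]]
}.

Variables (M : set V) (sigma : 'S_n) (xbar : V) (delta : R) (phi pT pN : V -> V).
Hypothesis G : local_graph M sigma xbar delta phi pT pN.
Local Notation T := (tangent_space M xbar).
Local Notation N := (normal_sp M xbar).
Local Notation Nred := (N `&` Deltapp sigma).
Local Notation B := (eball xbar delta).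
Local Notation piT x := (xbar + pT (x - xbar)).
Local Notation phib := (phibar xbar phi pT pN).
Implicit Types (s : 'S_n) (u v w x y : V).

Let Mxbar := local_graph_base G.
Let Dxbar := local_graph_stratum G.
Let B_open := local_graph_open G.
Let MB_sym := local_graph_sym G.
Let pT_proj := local_graph_pT G.
Let pN_proj := local_graph_pN G.
Let phi_normal := local_graph_normal G.
Let M_graph := local_graph_graph G.

Lemma xbar_in_B : B xbar.
Proof. by rewrite /eball /= subrr /enorm dot0l sqrtr0; exact: local_graph_radius G. Qed.

Lemma Nred_subspace : is_subspace Nred.
Proof. by apply: subspaceI; [exact: normal_sp_subspace | exact: Deltapp_subspace]. Qed.

Lemma MB_pact s y : pact s xbar = xbar -> (M `&` B) y -> (M `&` B) (pact s y).
Proof.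
by move=> sx MBy; rewrite -(MB_sym.2 xbar s (conj Mxbar xbar_in_B) sx); exists y.
Qed.

Lemma T_pact s v : pact s xbar = xbar -> T v -> T (pact s v).
Proof.
move=> sx; apply: (tangent_space_pact B_open xbar_in_B sx) => y My By.
exact: (MB_pact sx (conj My By)).1.
Qed.

Lemma N_pact s w : pact s xbar = xbar -> N w -> N (pact s w).
Proof. by move=> sx; apply: normal_sp_pact => v; apply: T_pact; exact: pactV_fix. Qed.

Lemma Nred_pact s w : pact s xbar = xbar -> Nred w -> Nred (pact s w).
Proof. by move=> sx [Nw Pw]; rewrite (Deltapp_pact_fix Dxbar sx Pw). Qed.

Lemma pT_pact s u : pact s xbar = xbar -> pT (pact s u) = pact s (pT u).
Proof.
move=> sx; apply: (orth_proj_pact pT_proj) => v; apply: T_pact => //.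
exact: pactV_fix.
Qed.

Lemma pN_pact s u : pact s xbar = xbar -> pN (pact s u) = pN u.
Proof.
move=> sx; rewrite (orth_proj_pact pN_proj) => [|v|v]; last 2 first.
- exact: Nred_pact.
- by apply: Nred_pact; exact: pactV_fix.
exact: Deltapp_pact_fix Dxbar sx (pN_proj u).1.2.
Qed.

Lemma pT_graph y : T (y - xbar) -> B y -> pT (y + phi y - xbar) = y - xbar.
Proof.
move=> Ty By; rewrite addrAC; apply: (orth_projDorth pT_proj) => //.
exact: phi_normal.
Qed.

Lemma phi_pact s y : pact s xbar = xbar -> T (y - xbar) -> B y ->
  phi (pact s y) = pact s (phi y).
Proof.
move=> sx Ty By.
have : (M `&` B) (pact s (y + phi y)).
  by apply: MB_pact => //; rewrite M_graph; exists y.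
rewrite M_graph => -[y' [Ty' By'] Ey'].
have y'E : y' - xbar = pact s y - xbar.
  have -> : pact s y - xbar = pact s (y - xbar) by rewrite pactB sx.
  rewrite -(pT_graph Ty' By') Ey'.
  have -> : pact s (y + phi y) - xbar = pact s (y - xbar) + pact s (phi y).
    by rewrite pactB pactD sx addrAC.
  apply: (orth_projDorth pT_proj); first exact: T_pact.
  exact/N_pact/phi_normal.
move/addIr: y'E => y'E; rewrite -y'E; apply: (addrI y').
by rewrite Ey' pactD y'E.
Qed.

(* Transpositions of two coordinates in one orbit of [sigma] fix [xbar]:
   equivariance handles the case where they also fix [y], orthogonality to
   [T] the case where they do not. *)
Lemma phi_Deltapp y : T (y - xbar) -> B y -> Deltapp sigma (phi y).
Proof.
move=> Ty By i j ij; set tau := tperm i j.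
have xij : xbar 0 i = xbar 0 j := (Dxbar i j).2 ij.
have tau_x : pact tau xbar = xbar := pact_tperm_fix xij.
have [vij|vij] := eqVneq ((y - xbar) 0 i) ((y - xbar) 0 j).
  have tau_y : pact tau y = y.
    by apply: pact_tperm_fix; move: vij; rewrite !mxE xij => /addIr.
  have := phi_pact tau_x Ty By; rewrite tau_y => {1}->.
  by rewrite mxE tpermV tpermL.
have : dot (phi y) ((y - xbar) - pact tau (y - xbar)) = 0.
  by rewrite dotBr !(phi_normal Ty By) ?subrr //; exact: T_pact.
rewrite pact_tperm dotZr dotBr !dot_delta_mx => /eqP.
by rewrite mulf_eq0 subr_eq0 (negbTE vij) /= subr_eq0 => /eqP.
Qed.

Lemma phibarE x : phib x = phi (piT x) - pN (x - xbar).
Proof. by rewrite /phibar [xbar + phi _]addrC addrKA. Qed.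

Lemma piT_in_B x : B x -> T (piT x - xbar) /\ B (piT x).
Proof.
rewrite /eball /= addrAC subrr add0r => Bx.
by split; [exact: (pT_proj _).1 | exact: le_lt_trans (orth_proj_norm pT_proj _) Bx].
Qed.

Lemma phibar_Nred x : B x -> Nred (phib x).
Proof.
move=> /piT_in_B[Tx Bx]; rewrite phibarE; apply: (subspaceB Nred_subspace).
  by split; [exact: phi_normal | exact: phi_Deltapp].
exact: (pN_proj _).1.
Qed.

Lemma phibar_pact s x : pact s xbar = xbar -> B x -> phib (pact s x) = phib x.
Proof.
move=> sx /piT_in_B[Tx Bx]; rewrite !phibarE.
have -> : pact s x - xbar = pact s (x - xbar) by rewrite pactB sx.
rewrite pN_pact // pT_pact // -{1}sx -pactD phi_pact //.
by rewrite (Deltapp_pact_fix Dxbar sx (phi_Deltapp Tx Bx)).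
Qed.

Lemma phibar_eq0 x : subsum T Nred (x - xbar) -> B x -> (phib x = 0 <-> (M `&` B) x).
Proof.
move=> [t Tt [r Nr tr]] Bx.
have pTx : pT (x - xbar) = t by rewrite -tr (orth_projDorth pT_proj) //; exact: Nr.1.
have pNx : pN (x - xbar) = r.
  by rewrite -tr; apply: (orth_projE pN_proj) => // v [Nv _]; rewrite addrK dotC Nv.
have [Tp Bp] := piT_in_B Bx; rewrite pTx in Tp Bp.
rewrite phibarE pTx pNx; split.
  move/eqP; rewrite subr_eq0 => /eqP rE; rewrite M_graph.
  by exists (xbar + t) => //; rewrite rE -addrA tr addrC subrK.
rewrite M_graph => -[y [Ty By] yE].
have ty : t = y - xbar by rewrite -pTx -yE pT_graph.
have -> : xbar + t = y by rewrite ty addrC subrK.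
apply/eqP; rewrite subr_eq0 eq_sym; apply/eqP/(addrI t).
by rewrite tr -yE ty addrAC.
Qed.

Lemma phibar_differentiable :
  C2_on B (phi \o (fun x => piT x)) -> differentiable phib xbar.
Proof.
move=> [_ C2].
have /nbhs_ballP [r /= r0 rB] : nbhs xbar B.
  by apply: open_nbhs_nbhs; split; [exact: B_open | exact: xbar_in_B].
have dphiT : differentiable (phi \o (fun x => piT x)) xbar.
  apply: (@continuous_partials_differentiable R n n _ xbar r r0) => [z zr v|k].
    have Bz : B z by apply: rB; rewrite -ball_normE /= distrC.
    by have [] := C2 z Bz v v.
  have [_ _ ck _] := C2 xbar xbar_in_B (delta_mx 0 k) (delta_mx 0 k).
  exact: ck.
pose P := \matrix_k pN (delta_mx 0 k).
have -> : phib = fun x =>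
    xbar + (phi \o (fun x => piT x)) x - (xbar + (x *m P - xbar *m P)).
  apply: funext => x; rewrite /phibar -mulmxBl.
  by rewrite -(orth_proj_mulmx pN_proj Nred_subspace).
have dP : differentiable (mulmxr P : V -> V) xbar.
  by apply: linear_differentiable; exact: mulmxr_continuous.
by apply: differentiableB; apply: differentiableD => //; apply: differentiableB.
Qed.

(* Along a reduced normal direction [piT] is constant, so [phib] moves by
   exactly minus that direction. *)
Lemma phibar_jacobian w : differentiable phib xbar -> Nred w -> 'd phib xbar (- w) = w.
Proof.
move=> dphib Nw; rewrite -deriveE //; apply/lim_near_cst => //=; near=> h.
have h0 : h != 0 by near: h; exact: nbhs_dnbhs_neq.
have Nhw : Nred (h *: - w) by apply/(subspaceZ Nred_subspace)/(subspaceN Nred_subspace).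
have T0 := tangent_space0 Mxbar.
have pT_hw : pT (h *: - w) = 0.
  by rewrite -[h *: - w]add0r (orth_projDorth pT_proj) //; exact: Nhw.1.
have phib_hw : phib (h *: - w + xbar) = phi xbar - h *: - w.
  by rewrite phibarE addrK pT_hw addr0 (orth_proj_id pN_proj Nhw).
have phib_xbar : phib xbar = phi xbar.
  rewrite phibarE subrr (orth_proj_id pT_proj T0) addr0.
  by rewrite (orth_proj_id pN_proj (subspace0 Nred_subspace)) subr0.
rewrite phib_hw phib_xbar addrAC subrr add0r !scalerN opprK scalerA mulVf //.
exact: scale1r.
Unshelve. all: by end_near.
Qed.

End LocalEquation.

Theorem theorem4p12 (R : realType) (n d : nat) (M : set 'rV[R]_n)
  (sstar sigma : 'S_n) (xbar : 'rV[R]_n) (delta delta1 delta2 : R)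
  (phi pT pN : 'rV[R]_n -> 'rV[R]_n) :
  let T := tangent_space M xbar in
  let N := normal_sp M xbar in
  let Nred := N `&` Deltapp sigma in
  let B := eball xbar delta in
  let piT := fun x => xbar + pT (x - xbar) in
  let calB := [set x | pdist [pred i | sstar i == i] x xbar < delta1 /\
                       pdist [pred i | sstar i != i] x xbar < delta2] in
  let D := [set x | subsum T Nred (x - xbar) /\ calB x] in
  let phib := phibar xbar phi pT pN in
  (* M : locally symmetric C^2 submanifold of dimension d, characteristic
     permutation sstar *)
  C2_submanifold d M -> locally_symmetric M -> characteristic_perm M sstar ->
  (* xbar, delta *)
  M xbar -> Delta sigma xbar -> 0 < delta ->
  (forall y (s' : 'S_n), B y -> Delta s' y -> refines s' sigma) ->
  strongly_locally_symmetric (M `&` B) ->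
  is_orth_proj T pT ->
  {in M `&` B &, injective piT} ->
  (* phi : (xbar + T) /\ B -> N, C^2, local graph description of M *)
  (forall y, T (y - xbar) -> B y -> N (phi y)) ->
  C2_on B (phi \o piT) ->
  M `&` B = [set y + phi y | y in [set y | T (y - xbar) /\ B y]] ->
  (* reduced normal space, box calB, domain D *)
  is_orth_proj Nred pN ->
  0 < delta1 -> 0 < delta2 -> calB `<=` B ->
  [/\ (* well defined, values in Nred *)
      (forall x, D x -> (T (piT x - xbar) /\ B (piT x)) /\ Nred (phib x)),
      (* local symmetry *)
      (forall x (s' : 'S_n), D x -> pact s' xbar = xbar ->
         phib (pact s' x) = phib x),
      (* local equation *)
      (forall x, D x -> (phib x = 0 <-> (M `&` B) x)) &
      (* Jacobian at xbar onto Nred *)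
      differentiable phib xbar /\
      (forall w, Nred w -> exists2 v, subsum T Nred v & 'd phib xbar v = w)].
Proof.
move=> T N Nred B piT calB D phib _ _ _ Mx Dx delta_gt0 _ MB_sym pT_proj _
  phi_normal C2phi M_graph pN_proj _ _ calB_B.
have G : local_graph M sigma xbar delta phi pT pN by split => //; exact: C2phi.1.
have DB x : D x -> B x by move=> [_ /calB_B].
have dphib : differentiable phib xbar := phibar_differentiable G C2phi.
split.
- by move=> x /DB Bx; split; [apply: (piT_in_B G Bx) | apply: (phibar_Nred G Bx)].
- by move=> x s /DB Bx sx; apply: (phibar_pact G sx Bx).
- by move=> x [Sx /calB_B Bx]; apply: (phibar_eq0 G Sx Bx).
- split=> // w Nw; exists (- w); last by apply: (phibar_jacobian G dphib Nw).
  exists 0; first exact: tangent_space0 Mx.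
  by exists (- w); rewrite ?add0r //; have := subspaceN (Nred_subspace M sigma xbar) Nw.
Qed.
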